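(* Let $\Theta\subseteq\mathbb{R}^p$ be open and $\rho_\theta=\sum_{k=1}^dp_k(\theta)|w_k(\theta)\rangle\langle w_k(\theta)|$ a family of density matrices on $\mathbb{C}^d$, with $p_k\ge0$ differentiable and $\{|w_k(\theta)\rangle\}$ an orthonormal basis of $\mathbb{C}^d$ depending differentiably on $\theta$. Then, for every $\theta\in\Theta$, $H_\theta\le C_L(\theta)\le C_\Upsilon(\theta)$ in positive semidefinite order. Equality $H_\theta=C_L(\theta)$ holds if and only if $\langle\frac{\partial w_j}{\partial\theta^m}|w_k\rangle=0$ for all $m$ and all $j\neq k$ with $p_j,p_k>0$. Equality $C_L(\theta)=C_\Upsilon(\theta)$ holds if and only if $\langle\frac{\partial w_i}{\partial\theta^m}|w_i\rangle=0$ for all $m$ and all $i$ with $p_i>0$.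
   Context: Write $|w_i^{(m)}\rangle=\partial|w_i\rangle/\partial\theta^m$. $H_\theta$ is the SLD quantum information matrix with entries $(H_\theta)_{kl}=\mathrm{Re}\,\mathrm{tr}\{\lambda^k\rho_\theta\lambda^l\}$, where $\lambda^k$ is a Hermitian solution of $\frac{\partial\rho_\theta}{\partial\theta^k}=\frac12(\rho_\theta\lambda^k+\lambda^k\rho_\theta)$. The $C_L$ quantum information is the $p\times p$ matrix $(C_L)_{kl}=\sum_{i:p_i>0}\frac{1}{p_i}\frac{\partial p_i}{\partial\theta^k}\frac{\partial p_i}{\partial\theta^l}+4\,\mathrm{Re}\sum_{i<j}(p_i+p_j)\langle w_i^{(k)}|w_j\rangle\langle w_j|w_i^{(l)}\rangle$. The Sarovar–Milburn quantum information of the family (relative to the chosen eigenvectors) is $(C_\Upsilon)_{kl}=(C_L)_{kl}+4\sum_{i:p_i>0}p_i\langle w_i^{(k)}|w_i\rangle\langle w_i|w_i^{(l)}\rangle$. *)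

From HB Require Import structures.
From mathcomp Require Import all_boot all_order all_algebra.
From mathcomp Require Import all_classical all_reals all_analysis.
From mathcomp.real_closed Require Import complex.
Set Implicit Arguments. Unset Strict Implicit. Unset Printing Implicit Defensive.
Import Order.TTheory GRing.Theory Num.Theory.
Import numFieldNormedType.Exports.
Local Open Scope ring_scope.

Section QInfo.
Variable R : realType.
Local Notation C := (complex R).

Definition rc (x : R) : C := Complex x 0.

Definition adjmx m n (A : 'M[C]_(m, n)) : 'M[C]_(n, m) :=
  \matrix_(i, j) conjc (A j i).

Definition braket n (u v : 'cV[C]_n) : C := (adjmx u *m v) 0 0.

Variable p : nat.

Definition evec (m : 'I_p) : 'rV[R]_p := delta_mx 0 m.

Definition pder (f : 'rV[R]_p -> R) (m : 'I_p) (th : 'rV[R]_p) : R :=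
  'D_(evec m) f th.

Definition cpder (f : 'rV[R]_p -> C) (m : 'I_p) (th : 'rV[R]_p) : C :=
  Complex (pder (fun x => complex.Re (f x)) m th) (pder (fun x => complex.Im (f x)) m th).

Definition dket d (w : 'rV[R]_p -> 'cV[C]_d) (m : 'I_p) (th : 'rV[R]_p)
  : 'cV[C]_d := \col_a cpder (fun x => w x a 0) m th.

Definition dmx d (A : 'rV[R]_p -> 'M[C]_d) (m : 'I_p) (th : 'rV[R]_p)
  : 'M[C]_d := \matrix_(a, b) cpder (fun x => A x a b) m th.

Variable d : nat.
Variable P : 'I_d -> 'rV[R]_p -> R.
Variable W : 'I_d -> 'rV[R]_p -> 'cV[C]_d.

Definition rho (th : 'rV[R]_p) : 'M[C]_d :=
  \sum_(k < d) rc (P k th) *: (W k th *m adjmx (W k th)).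

Definition is_SLD (lam : 'M[C]_d) (m : 'I_p) (th : 'rV[R]_p) : Prop :=
  adjmx lam = lam /\
  dmx rho m th = 2^-1 *: (rho th *m lam + lam *m rho th).

Definition Hmx (lam : 'I_p -> 'M[C]_d) (th : 'rV[R]_p) : 'M[C]_p :=
  \matrix_(k, l) rc (complex.Re (\tr (lam k *m rho th *m lam l))).

Definition CLmx (th : 'rV[R]_p) : 'M[C]_p :=
  \matrix_(k, l)
    (rc (\sum_(i < d | 0 < P i th)
            (P i th)^-1 * pder (P i) k th * pder (P i) l th)
     + rc (4 * complex.Re (\sum_(i < d) \sum_(j < d | (i < j)%N)
            rc (P i th + P j th)
            * braket (dket (W i) k th) (W j th)
            * braket (W j th) (dket (W i) l th)))).

Definition CUmx (th : 'rV[R]_p) : 'M[C]_p :=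
  CLmx th + \matrix_(k, l)
    (rc 4 * \sum_(i < d | 0 < P i th)
        rc (P i th) * braket (dket (W i) k th) (W i th)
                    * braket (W i th) (dket (W i) l th)).

End QInfo.

(* Loewner (positive semidefinite) order on complex square matrices:
   A <= B iff x^* (B - A) x is a nonnegative real for every x. *)
Definition psd_le (R : realType) n (A B : 'M[complex R]_n) : Prop :=
  forall x : 'cV[complex R]_n, 0 <= (adjmx x *m (B - A) *m x) 0 0.

From HB Require Import structures.
From mathcomp Require Import all_boot all_order all_algebra.
From mathcomp Require Import all_classical all_reals all_analysis.
From mathcomp.real_closed Require Import complex.
From mathcomp Require Import ring.

Set Implicit Arguments.
Unset Strict Implicit.
Unset Printing Implicit Defensive.

Import Order.TTheory GRing.Theory Num.Theory.
Import numFieldNormedType.Exports.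
Local Open Scope ring_scope.

(* In an orthonormal eigenbasis [w_i] of [rho], the SLD equation reads
   [(p_i + p_j) lambda^k_ij = 2 (d_k rho)_ij], and differentiating the orthonormality
   relations gives [(d_k rho)_ij = delta_ij d_k p_i + (p_j - p_i) b^k_ij] with
   [b^k_ij = <w_i|d_k w_j>].  Substituting into [H_kl = Re sum_ij lambda^k_ij p_j lambda^l_ji],
   the diagonal terms give the classical part of [C_L], while a pair [i < j] contributes
   [4 (p_j - p_i)^2 / (p_i + p_j) Re (b^k_ij conj b^l_ij)] to [H] against
   [4 (p_i + p_j) Re (b^k_ij conj b^l_ij)] to [C_L], a gap of weight
   [16 p_i p_j / (p_i + p_j) >= 0].  So [C_L - H] and [C_Upsilon - C_L] are
   nonnegative combinations of rank-one matrices [(conj z_k z_l)_kl]: they are positive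
   semidefinite, and they vanish iff every term of positive weight does, which can be read
   off their diagonals. *)

(* The morphism lemmas of [complex.v] ([rmorphM], [conjcK], ...) produce [conjc] and [%:C]
   at an [rcfType] instance that does not match them syntactically at a [realType], so the
   identities used below are proved directly. *)
Section ComplexScalars.
Variable R : realType.
Implicit Types (x : R) (a b : R[i]).

Lemma rc_ge0 x : (0 <= rc x) = (0 <= x).
Proof. exact: ler0c. Qed.

Lemma rc_eq0 x : (rc x == 0) = (x == 0).
Proof. by rewrite eq_complex /= eqxx andbT. Qed.

Lemma rcD x y : rc (x + y) = rc x + rc y.
Proof. by apply/eqP; rewrite eq_complex /= addr0 !eqxx. Qed.

Lemma rcN x : rc (- x) = - rc x.
Proof. by apply/eqP; rewrite eq_complex /= oppr0 !eqxx. Qed.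

Lemma rcB x y : rc (x - y) = rc x - rc y.
Proof. by rewrite rcD rcN. Qed.

Lemma rcM x y : rc (x * y) = rc x * rc y.
Proof. by apply/eqP; rewrite eq_complex /= !mulr0 mul0r subr0 addr0 !eqxx. Qed.

Lemma rc0 : rc 0 = 0 :> R[i]. Proof. by []. Qed.
Lemma rc1 : rc 1 = 1 :> R[i]. Proof. by []. Qed.

Lemma rcV x : rc x^-1 = (rc x)^-1.
Proof.
have [->|x0] := eqVneq x 0; first by rewrite invr0 rc0 invr0.
have rx0 : rc x != 0 by rewrite rc_eq0.
by apply: (mulfI rx0); rewrite -rcM !divff // rc1.
Qed.

Lemma rc_sum (I : finType) (P : pred I) (f : I -> R) :
  rc (\sum_(i | P i) f i) = \sum_(i | P i) rc (f i).
Proof. by apply: big_morph; [exact: rcD | exact: rc0]. Qed.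

Lemma Re_add a b : complex.Re (a + b) = complex.Re a + complex.Re b.
Proof. by case: a; case: b. Qed.

Lemma Im_add a b : complex.Im (a + b) = complex.Im a + complex.Im b.
Proof. by case: a; case: b. Qed.

Lemma Re_sum (I : finType) (P : pred I) (f : I -> R[i]) :
  complex.Re (\sum_(i | P i) f i) = \sum_(i | P i) complex.Re (f i).
Proof. by apply: big_morph; [exact: Re_add | by []]. Qed.

Lemma Re_mul a b :
  complex.Re (a * b) = complex.Re a * complex.Re b - complex.Im a * complex.Im b.
Proof. by case: a; case: b. Qed.

Lemma Im_mul a b :
  complex.Im (a * b) = complex.Re a * complex.Im b + complex.Im a * complex.Re b.
Proof. by case: a => ? ?; case: b => ? ? /=; rewrite addrC. Qed.

Lemma Re_conjc a : complex.Re (conjc a) = complex.Re a. Proof. by case: a. Qed.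
Lemma Im_conjc a : complex.Im (conjc a) = - complex.Im a. Proof. by case: a. Qed.

Lemma conjc_invol a : conjc (conjc a) = a.
Proof. by case: a => x y; rewrite /= opprK. Qed.

Lemma conjcD a b : conjc (a + b) = conjc a + conjc b.
Proof. by case: a => ? ?; case: b => ? ? /=; rewrite opprD. Qed.

Lemma conjcN a : conjc (- a) = - conjc a.
Proof. by case: a. Qed.

Lemma conjcM a b : conjc (a * b) = conjc a * conjc b.
Proof.
case: a => ? ?; case: b => ? ? /=; apply/eqP.
by rewrite eq_complex /= !mulrN !mulNr opprK opprD !eqxx.
Qed.

Lemma conjc_rc x : conjc (rc x) = rc x.
Proof. by rewrite /= oppr0. Qed.

Lemma conjcV a : conjc a^-1 = (conjc a)^-1.
Proof.
have [->|a0] := eqVneq a 0; first by rewrite invr0 /= oppr0 invr0.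
have ca0 : conjc a != 0 by apply: contraNneq a0 => ca0; rewrite -[a]conjc_invol ca0 /= oppr0.
by apply: (mulfI ca0); rewrite -conjcM !divff // /= oppr0.
Qed.

Lemma conjc_sum (I : finType) (P : pred I) (f : I -> R[i]) :
  conjc (\sum_(i | P i) f i) = \sum_(i | P i) conjc (f i).
Proof. by apply: big_morph; [exact: conjcD | rewrite /= oppr0]. Qed.

Lemma rc_Re a : rc (complex.Re a) = (a + conjc a) / 2.
Proof. exact: ReJ_add. Qed.

Lemma conjc_mul_ge0 a : 0 <= conjc a * a.
Proof. by rewrite mulrC mulcJ_ge0. Qed.

Lemma conjc_mul_eq0 a : (conjc a * a == 0) = (a == 0).
Proof.
rewrite mulf_eq0 orb_idl // => /eqP ca0.
by rewrite -[a]conjc_invol ca0 /= oppr0.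
Qed.

End ComplexScalars.

Lemma sum_delta_l (V : pzSemiRingType) (I : finType) (i : I) (F : I -> V) :
  \sum_k (i == k)%:R * F k = F i.
Proof.
rewrite (bigD1 i) //= eqxx mul1r big1 ?addr0 // => k /negbTE.
by rewrite eq_sym => ->; rewrite mul0r.
Qed.

Lemma sum_delta_r (V : pzSemiRingType) (I : finType) (j : I) (F : I -> V) :
  \sum_k F k * (k == j)%:R = F j.
Proof.
rewrite (bigD1 j) //= eqxx mulr1 big1 ?addr0 // => k /negbTE ->.
by rewrite mulr0.
Qed.

Lemma sum_diag_offdiag (V : nmodType) n (f : 'I_n -> 'I_n -> V) :
  \sum_(i < n) \sum_(j < n) f i j =
  \sum_(i < n) f i i + \sum_(i < n) \sum_(j < n | (i < j)%N) (f i j + f j i).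
Proof.
have split_row (i : 'I_n) : \sum_(j < n) f i j =
    f i i + (\sum_(j < n | (i < j)%N) f i j + \sum_(j < n | (j < i)%N) f i j).
  rewrite (bigD1 i) //= (bigID (fun j : 'I_n => (i < j)%N)) /=; congr (_ + (_ + _)).
    by apply: eq_bigl => j; rewrite andb_idl // => ij; apply: contraTneq ij => ->; rewrite ltnn.
  by apply: eq_bigl => j; rewrite -leqNgt [RHS]ltn_neqAle.
rewrite (eq_bigr _ (fun i _ => split_row i)) !big_split /=; congr (_ + _).
rewrite [X in _ + X = _](exchange_big_dep xpredT) //= -big_split /=.
by apply: eq_bigr => i _; rewrite big_split.
Qed.

Section ComplexDerivative.
Variables (R : realType) (p : nat).
Implicit Types (th v : 'rV[R]_p) (f g : 'rV[R]_p -> R[i]) (z w : R[i]).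

Definition is_cderive th v f z :=
  is_derive th v (fun x => complex.Re (f x)) (complex.Re z) /\
  is_derive th v (fun x => complex.Im (f x)) (complex.Im z).

Lemma is_cderive_eq th v f z w : is_cderive th v f z -> z = w -> is_cderive th v f w.
Proof. by move=> ? <-. Qed.

Lemma is_cderive_cst th v z : is_cderive th v (fun=> z) 0.
Proof. by split; exact: is_derive_cst. Qed.

Lemma near_eq_is_cderive th v f g z :
  (\forall x \near th, f x = g x) -> is_cderive th v f z -> is_cderive th v g z.
Proof.
move=> fg [dRe dIm]; split.
- by apply: (near_eq_is_derive _ dRe); apply: filterS fg => x /= ->.
- by apply: (near_eq_is_derive _ dIm); apply: filterS fg => x /= ->.
Qed.

Lemma is_cderiveD th v f g z w :
  is_cderive th v f z -> is_cderive th v g w -> is_cderive th v (fun x => f x + g x) (z + w).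
Proof.
move=> [fRe fIm] [gRe gIm]; split.
- have -> : (fun x => complex.Re (f x + g x)) =
    (fun x => complex.Re (f x)) + (fun x => complex.Re (g x)).
    by apply/funext => x; rewrite Re_add.
  by rewrite Re_add; exact: is_deriveD.
- have -> : (fun x => complex.Im (f x + g x)) =
    (fun x => complex.Im (f x)) + (fun x => complex.Im (g x)).
    by apply/funext => x; rewrite Im_add.
  by rewrite Im_add; exact: is_deriveD.
Qed.

Lemma is_cderive_sum n (f : 'I_n -> 'rV[R]_p -> R[i]) (z : 'I_n -> R[i]) th v :
  (forall i, is_cderive th v (f i) (z i)) ->
  is_cderive th v (fun x => \sum_(i < n) f i x) (\sum_(i < n) z i).
Proof.
move=> df; rewrite -fct_sumE.
by elim/big_ind2: _ => // [|? ? ? ? ? ?]; [exact: is_cderive_cst | exact: is_cderiveD].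
Qed.

Lemma is_cderiveM th v f g z w :
  is_cderive th v f z -> is_cderive th v g w ->
  is_cderive th v (fun x => f x * g x) (z * g th + f th * w).
Proof.
move=> [fRe fIm] [gRe gIm]; split.
- have -> : (fun x => complex.Re (f x * g x)) =
    (fun x => complex.Re (f x)) * (fun x => complex.Re (g x)) -
    (fun x => complex.Im (f x)) * (fun x => complex.Im (g x)).
    by apply/funext => x; rewrite Re_mul.
  apply: is_derive_eq (is_deriveB (is_deriveM fRe gRe) (is_deriveM fIm gIm)) _.
  by rewrite Re_add !Re_mul /GRing.scale /=; ring.
- have -> : (fun x => complex.Im (f x * g x)) =
    (fun x => complex.Re (f x)) * (fun x => complex.Im (g x)) +
    (fun x => complex.Im (f x)) * (fun x => complex.Re (g x)).
    by apply/funext => x; rewrite Im_mul.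
  apply: is_derive_eq (is_deriveD (is_deriveM fRe gIm) (is_deriveM fIm gRe)) _.
  by rewrite Im_add !Im_mul /GRing.scale /=; ring.
Qed.

Lemma is_cderive_conjc th v f z :
  is_cderive th v f z -> is_cderive th v (fun x => conjc (f x)) (conjc z).
Proof.
move=> [fRe fIm]; split.
- by rewrite Re_conjc; under eq_fun do rewrite Re_conjc.
- rewrite Im_conjc; under eq_fun do rewrite Im_conjc.
  exact: is_deriveN.
Qed.

Lemma is_cderive_rc th v (h : 'rV[R]_p -> R) dh :
  is_derive th v h dh -> is_cderive th v (fun x => rc (h x)) (rc dh).
Proof. by move=> hd; split => //=; exact: is_derive_cst. Qed.

Lemma cpder_val m th f z : is_cderive th (evec R m) f z -> cpder f m th = z.
Proof. by case: z => a b [da db]; rewrite /cpder /pder !derive_val. Qed.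

End ComplexDerivative.

Section BraKet.
Variable R : realType.
Local Notation C := R[i].

Lemma adjmxE m n (A : 'M[C]_(m, n)) i j : adjmx A i j = conjc (A j i).
Proof. exact: mxE. Qed.

Lemma adjmxK m n (A : 'M[C]_(m, n)) : adjmx (adjmx A) = A.
Proof. by apply/matrixP => i j; rewrite !mxE conjc_invol. Qed.

Lemma adjmxM m n k (A : 'M[C]_(m, n)) (B : 'M[C]_(n, k)) :
  adjmx (A *m B) = adjmx B *m adjmx A.
Proof.
apply/matrixP => i j; rewrite !mxE conjc_sum; apply: eq_bigr => a _.
by rewrite !mxE conjcM mulrC.
Qed.

Lemma braketE n (u v : 'cV[C]_n) : braket u v = \sum_a conjc (u a 0) * v a 0.
Proof. by rewrite /braket mxE; apply: eq_bigr => a _; rewrite mxE. Qed.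

Lemma braketC n (u v : 'cV[C]_n) : braket u v = conjc (braket v u).
Proof.
rewrite !braketE conjc_sum; apply: eq_bigr => a _.
by rewrite conjcM conjc_invol mulrC.
Qed.

Definition psd n (A : 'M[C]_n) :=
  forall x : 'cV[C]_n, 0 <= (adjmx x *m A *m x) 0 0.

Definition rank1_mx n (z : 'I_n -> C) : 'M[C]_n :=
  \matrix_(k, l) (conjc (z k) * z l).

Section Psd.
Variable n : nat.
Implicit Types (A B : 'M[C]_n) (z : 'I_n -> C).

Lemma psdD A B : psd A -> psd B -> psd (A + B).
Proof. by move=> pA pB x; rewrite mulmxDr mulmxDl mxE addr_ge0. Qed.

Lemma psdZ c A : 0 <= c -> psd A -> psd (c *: A).
Proof. by move=> c0 pA x; rewrite -scalemxAr -scalemxAl mxE mulr_ge0. Qed.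

Lemma psd_sum (I : finType) (P : pred I) (A : I -> 'M[C]_n) :
  (forall i, P i -> psd (A i)) -> psd (\sum_(i | P i) A i).
Proof.
move=> pA x; rewrite mulmx_sumr mulmx_suml summxE.
by apply: sumr_ge0 => i /pA.
Qed.

Lemma psd_rank1 z : psd (rank1_mx z).
Proof.
move=> x; set s := \sum_k z k * x k 0.
suff -> : (adjmx x *m rank1_mx z *m x) 0 0 = conjc s * s by exact: conjc_mul_ge0.
rewrite mxE /s mulr_sumr; apply: eq_bigr => l _.
rewrite mxE conjc_sum !mulr_suml; apply: eq_bigr => k _.
by rewrite !mxE conjcM; ring.
Qed.

Lemma rank1_mx_eq0 z : (forall k, z k = 0) -> rank1_mx z = 0.
Proof. by move=> z0; apply/matrixP => k l; rewrite !mxE !z0 mulr0. Qed.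

Lemma psd_diag_ge0 A m : psd A -> 0 <= A m m.
Proof.
move=> /(_ (delta_mx m 0)).
suff -> : adjmx (delta_mx m 0) = delta_mx 0 m :> 'rV[C]_n.
  by rewrite -rowE -colE !mxE.
by apply/matrixP => i j; rewrite !mxE; case: (j == m); case: (i == 0); rewrite /= oppr0.
Qed.

Lemma psd_sum_diag_eq0 (I : finType) (P : pred I) (A : I -> 'M[C]_n) m :
  (forall i, P i -> psd (A i)) -> (\sum_(i | P i) A i) m m = 0 ->
  forall i, P i -> A i m m = 0.
Proof.
move=> pA; rewrite summxE => /psumr_eq0P sum0 i Pi.
by apply: sum0 => // j /pA; exact: psd_diag_ge0.
Qed.

End Psd.
End BraKet.

Section OrthonormalBasis.
Variables (R : realType) (d : nat).
Local Notation C := R[i].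
Implicit Types (w : 'I_d -> 'cV[C]_d) (A B L : 'M[C]_d) (q : 'I_d -> R).

Definition orthonormal w := forall i j, braket (w i) (w j) = (i == j)%:R.

Definition basis_mx w : 'M[C]_d := \matrix_(a, i) w i a 0.

Definition coords w A := adjmx (basis_mx w) *m A *m basis_mx w.

Definition spectral_mx q w : 'M[C]_d := \sum_(k < d) rc (q k) *: (w k *m adjmx (w k)).

Lemma coordsDE w A B i j : coords w (A + B) i j = coords w A i j + coords w B i j.
Proof. by rewrite /coords mulmxDr mulmxDl mxE. Qed.

Lemma coordsZE w c A i j : coords w (c *: A) i j = c * coords w A i j.
Proof. by rewrite /coords -scalemxAr -scalemxAl mxE. Qed.

Lemma coords_sum w n (A : 'I_n -> 'M[C]_d) :
  coords w (\sum_(k < n) A k) = \sum_(k < n) coords w (A k).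
Proof. by rewrite /coords mulmx_sumr mulmx_suml. Qed.

Lemma coords_outer w (x y : 'cV[C]_d) i j :
  coords w (x *m adjmx y) i j = braket (w i) x * braket y (w j).
Proof.
rewrite /coords -!mulmxA mulmxA mxE big_ord1 !braketE.
by congr (_ * _); rewrite mxE; apply: eq_bigr => a _; rewrite !mxE.
Qed.

Lemma coords_hermitian w A :
  adjmx A = A -> forall i j, coords w A j i = conjc (coords w A i j).
Proof.
move=> hA i j.
have : adjmx (coords w A) = coords w A by rewrite /coords !adjmxM adjmxK hA mulmxA.
by move=> /matrixP /(_ j i) <-; rewrite mxE.
Qed.

Section Orthonormal.
Variable w : 'I_d -> 'cV[C]_d.
Hypothesis w_on : orthonormal w.

Lemma basis_mx_unitary :
  adjmx (basis_mx w) *m basis_mx w = 1%:M /\ basis_mx w *m adjmx (basis_mx w) = 1%:M.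
Proof.
have UU : adjmx (basis_mx w) *m basis_mx w = 1%:M.
  apply/matrixP => i j; rewrite mxE [RHS]mxE -w_on braketE.
  by apply: eq_bigr => a _; rewrite !mxE.
by split => //; apply: mulmx1C.
Qed.

Lemma coordsM A B : coords w (A *m B) = coords w A *m coords w B.
Proof.
have [_ UU] := basis_mx_unitary.
by rewrite /coords !mulmxA -[_ *m A *m basis_mx w *m _]mulmxA UU mulmx1.
Qed.

Lemma mxtrace_coords A : \tr (coords w A) = \tr A.
Proof. by have [_ UU] := basis_mx_unitary; rewrite /coords mxtrace_mulC mulmxA UU mul1mx. Qed.

Lemma coords_spectral q i j : coords w (spectral_mx q w) i j = rc (q i) * (i == j)%:R.
Proof.
rewrite coords_sum summxE -(sum_delta_l i (fun k => rc (q k) * (k == j)%:R)).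
by apply: eq_bigr => k _; rewrite coordsZE coords_outer !w_on; ring.
Qed.

Lemma coords_spectral_mull q L i j :
  (coords w (spectral_mx q w) *m L) i j = rc (q i) * L i j.
Proof.
rewrite mxE -(sum_delta_l i (fun k => rc (q k) * L k j)).
by apply: eq_bigr => k _; rewrite coords_spectral; have [->|_] := eqVneq i k; rewrite ?eqxx /=; ring.
Qed.

Lemma coords_spectral_mulr q L i j :
  (L *m coords w (spectral_mx q w)) i j = L i j * rc (q j).
Proof.
rewrite mxE -(sum_delta_r j (fun k => L i k * rc (q k))).
by apply: eq_bigr => k _; rewrite coords_spectral; have [->|_] := eqVneq k j; rewrite ?eqxx /=; ring.
Qed.

Lemma mxtrace_spectral_mul q A B :
  \tr (A *m spectral_mx q w *m B) =
  \sum_i \sum_j coords w A i j * rc (q j) * coords w B j i.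
Proof.
rewrite -mxtrace_coords !coordsM; apply: eq_bigr => i _.
by rewrite mxE; apply: eq_bigr => j _; rewrite coords_spectral_mulr.
Qed.

Lemma coords_sld q (L D : 'M[C]_d) :
  D = 2^-1 *: (spectral_mx q w *m L + L *m spectral_mx q w) ->
  forall i j, (rc (q i) + rc (q j)) * coords w L i j = 2 * coords w D i j.
Proof.
move=> -> i j; rewrite coordsZE coordsDE !coordsM.
by rewrite coords_spectral_mull coords_spectral_mulr; field.
Qed.

Lemma coords_spectral_derivative q dq (dw : 'I_d -> 'cV[C]_d) i j :
  (forall i j, braket (dw i) (w j) = - braket (w i) (dw j)) ->
  coords w (\sum_(k < d) (rc (dq k) *: (w k *m adjmx (w k))
     + rc (q k) *: (dw k *m adjmx (w k) + w k *m adjmx (dw k)))) i j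
  = (i == j)%:R * rc (dq i) + (rc (q j) - rc (q i)) * braket (w i) (dw j).
Proof.
move=> dw_anti; rewrite coords_sum summxE.
under eq_bigr do rewrite coordsDE !coordsZE coordsDE !coords_outer !w_on.
rewrite big_split /=; congr (_ + _).
  rewrite [RHS]mulrC -(sum_delta_l i (fun k => rc (dq k) * (k == j)%:R)).
  by apply: eq_bigr => k _; ring.
under eq_bigr do rewrite mulrDr.
rewrite big_split /=.
have -> : \sum_k rc (q k) * (braket (w i) (dw k) * (k == j)%:R) =
          rc (q j) * braket (w i) (dw j).
  rewrite -(sum_delta_r j (fun k => rc (q k) * braket (w i) (dw k))).
  by apply: eq_bigr => k _; ring.
have -> : \sum_k rc (q k) * ((i == k)%:R * braket (dw k) (w j)) =
          rc (q i) * braket (dw i) (w j).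
  rewrite -(sum_delta_l i (fun k => rc (q k) * braket (dw k) (w j))).
  by apply: eq_bigr => k _; ring.
by rewrite dw_anti; ring.
Qed.

End Orthonormal.
End OrthonormalBasis.

Section InformationAlgebra.
Variable R : realType.
Local Notation C := R[i].

Lemma sld_diag_term (q dk dl : R) (Lk Ll : C) :
  0 <= q ->
  (rc q + rc q) * Lk = 2 * rc dk -> (rc q + rc q) * Ll = 2 * rc dl ->
  rc (complex.Re (Lk * rc q * Ll)) = if 0 < q then rc (q^-1 * dk * dl) else 0.
Proof.
rewrite le_eqVlt => /predU1P[<- _ _|q0 Hk Hl]; first by rewrite ltxx mulr0 mul0r.
have q2 : rc q + rc q != 0 by rewrite -rcD rc_eq0 gt_eqF ?addr_gt0.
have Ek : Lk = 2 * rc dk / (rc q + rc q) by rewrite -Hk mulrC mulKf.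
have El : Ll = 2 * rc dl / (rc q + rc q) by rewrite -Hl mulrC mulKf.
have rq : rc q != 0 by rewrite rc_eq0 gt_eqF.
rewrite q0 Ek El !(rcM, rcV, rc_Re, conjcM, conjcV, conjcD, conjc_rc, rc1).
by field; rewrite rq q2.
Qed.

Lemma sld_pair_term (qi qj : R) (Lk Ll bk bl : C) :
  0 <= qi -> 0 <= qj ->
  (rc qi + rc qj) * Lk = 2 * ((rc qj - rc qi) * bk) ->
  (rc qi + rc qj) * Ll = 2 * ((rc qj - rc qi) * bl) ->
  rc (4 * complex.Re (rc (qi + qj) * bk * conjc bl))
   - rc (complex.Re (Lk * rc qj * conjc Ll + conjc Lk * rc qi * Ll))
  = rc (8 * qi * qj / (qi + qj)) * (bk * conjc bl + conjc bk * bl).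
Proof.
move=> qi0 qj0 Hk Hl.
have [s0|s0] := eqVneq (qi + qj) 0.
  have /andP[/eqP-> /eqP->] : (qi == 0) && (qj == 0) by rewrite -paddr_eq0 // s0.
  by rewrite !(addr0, mulr0, mul0r, subrr, rc0).
have rs : rc qi + rc qj != 0 by rewrite -rcD rc_eq0.
have Ek : Lk = 2 * ((rc qj - rc qi) * bk) / (rc qi + rc qj) by rewrite -Hk mulrC mulKf.
have El : Ll = 2 * ((rc qj - rc qi) * bl) / (rc qi + rc qj) by rewrite -Hl mulrC mulKf.
rewrite Ek El !(rcM, rcD, rcB, rcV, rc_Re).
rewrite !(conjcD, conjcM, conjcN, conjc_invol, conjcV, conjc_rc, rc1).
by field.
Qed.

Lemma sld_information_gap n (q dqk dql : 'I_n -> R) (Lk Ll bk bl : 'I_n -> 'I_n -> C) :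
  (forall i, 0 <= q i) ->
  (forall i j, Lk j i = conjc (Lk i j)) -> (forall i j, Ll j i = conjc (Ll i j)) ->
  (forall i j, (rc (q i) + rc (q j)) * Lk i j =
     2 * ((i == j)%:R * rc (dqk i) + (rc (q j) - rc (q i)) * bk i j)) ->
  (forall i j, (rc (q i) + rc (q j)) * Ll i j =
     2 * ((i == j)%:R * rc (dql i) + (rc (q j) - rc (q i)) * bl i j)) ->
  rc (\sum_(i < n | 0 < q i) (q i)^-1 * dqk i * dql i)
  + rc (4 * complex.Re (\sum_(i < n) \sum_(j < n | (i < j)%N)
          rc (q i + q j) * bk i j * conjc (bl i j)))
  - rc (complex.Re (\sum_(i < n) \sum_(j < n) Lk i j * rc (q j) * Ll j i))
  = \sum_(i < n) \sum_(j < n | (i < j)%N)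
      rc (8 * q i * q j / (q i + q j)) * (bk i j * conjc (bl i j) + conjc (bk i j) * bl i j).
Proof.
move=> q0 Lk_herm Ll_herm Lk_sld Ll_sld.
rewrite sum_diag_offdiag Re_add rcD !Re_sum rc_sum.
have -> : \sum_(i < n) rc (complex.Re (Lk i i * rc (q i) * Ll i i)) =
          rc (\sum_(i < n | 0 < q i) (q i)^-1 * dqk i * dql i).
  rewrite rc_sum [RHS]big_mkcond /=; apply: eq_bigr => i _.
  by apply: sld_diag_term => //; [rewrite Lk_sld | rewrite Ll_sld];
    rewrite eqxx subrr mul0r addr0 mul1r.
rewrite opprD addrACA subrr add0r mulr_sumr !rc_sum -sumrB; apply: eq_bigr => i _.
rewrite !Re_sum mulr_sumr !rc_sum -sumrB; apply: eq_bigr => j ij.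
have /negPf nij : i != j by apply: contraTneq ij => ->; rewrite ltnn.
rewrite (Lk_herm i j) (Ll_herm i j); apply: sld_pair_term => //.
- by rewrite Lk_sld nij mul0r add0r.
- by rewrite Ll_sld nij mul0r add0r.
Qed.

End InformationAlgebra.

Section AtState.
Variables (R : realType) (p d : nat).
Variables (P : 'I_d -> 'rV[R]_p -> R) (W : 'I_d -> 'rV[R]_p -> 'cV[R[i]]_d).
Variable th : 'rV[R]_p.
Hypothesis W_on_near : \forall x \near th, orthonormal (W^~ x).
Hypothesis P_diff : forall k, differentiable (P k) th.
Hypothesis W_diff : forall k (a : 'I_d),
  differentiable (fun x => complex.Re (W k x a 0)) th /\
  differentiable (fun x => complex.Im (W k x a 0)) th.
Hypothesis P_ge0 : forall k, 0 <= P k th.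
Variable lam : 'I_p -> 'M[R[i]]_d.
Hypothesis lam_sld : forall m, is_SLD P W (lam m) m th.

Let W_on : orthonormal (W^~ th) := nbhs_singleton W_on_near.

Lemma is_cderive_W k a m :
  is_cderive th (evec R m) (fun x => W k x a 0) (dket (W k) m th a 0).
Proof.
have [dRe dIm] := W_diff k a.
by rewrite mxE /cpder /pder; split; apply: derivableP; exact: diff_derivable.
Qed.

(* Differentiating [<w_i|w_j> = delta_ij], which holds near [th]. *)
Lemma dket_braket_anti m i j :
  braket (dket (W i) m th) (W j th) = - braket (W i th) (dket (W j) m th).
Proof.
have d0 : is_cderive th (evec R m) (fun x => braket (W i x) (W j x)) 0.
  apply: near_eq_is_cderive (is_cderive_cst _ _ ((i == j)%:R)).
  by apply: filterS W_on_near => x /(_ i j) ->.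
have dsum : is_cderive th (evec R m) (fun x => braket (W i x) (W j x))
    (braket (dket (W i) m th) (W j th) + braket (W i th) (dket (W j) m th)).
  under eq_fun do rewrite braketE.
  rewrite !braketE -big_split /=; apply: is_cderive_sum => a.
  exact: is_cderiveM (is_cderive_conjc (is_cderive_W i a m)) (is_cderive_W j a m).
by apply/eqP; rewrite -addr_eq0 -(cpder_val dsum) (cpder_val d0).
Qed.

Lemma dmx_rho m : dmx (rho P W) m th =
  \sum_(k < d) (rc (pder (P k) m th) *: (W k th *m adjmx (W k th))
    + rc (P k th) *: (dket (W k) m th *m adjmx (W k th)
                      + W k th *m adjmx (dket (W k) m th))).
Proof.
apply/matrixP => a b; rewrite mxE summxE; apply: cpder_val.
have dP k : is_derive th (evec R m) (P k) (pder (P k) m th).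
  exact/derivableP/diff_derivable.
under eq_fun do rewrite /rho summxE.
apply: is_cderive_eq (is_cderive_sum _) _ => [k|].
  under eq_fun do rewrite !mxE big_ord1 adjmxE.
  exact: is_cderiveM (is_cderive_rc (dP k))
    (is_cderiveM (is_cderive_W k a m) (is_cderive_conjc (is_cderive_W k b m))).
by apply: eq_bigr => k _; rewrite /dket !mxE !big_ord1 ?adjmxE !mxE.
Qed.

Local Notation b m i j := (braket (W i th) (dket (W j) m th)).

Lemma coords_sld_solution m i j :
  (rc (P i th) + rc (P j th)) * coords (W^~ th) (lam m) i j =
  2 * ((i == j)%:R * rc (pder (P i) m th) + (rc (P j th) - rc (P i th)) * b m i j).
Proof.
have [_ sld] := lam_sld m.
rewrite (coords_sld (q := P^~ th) W_on sld) dmx_rho //.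
by rewrite coords_spectral_derivative // => i' j'; exact: dket_braket_anti.
Qed.

Let pair_weight i j := 8 * P i th * P j th / (P i th + P j th).

Let pair_gap i j : 'M[R[i]]_p := rc (pair_weight i j) *:
  (rank1_mx (fun k => conjc (b k i j)) + rank1_mx (fun k => b k i j)).

Lemma CLmx_sub_Hmx : CLmx P W th - Hmx P W lam th =
  \sum_(i < d) \sum_(j < d | (i < j)%N) pair_gap i j.
Proof.
apply/matrixP => k l; rewrite !mxE summxE (mxtrace_spectral_mul W_on).
have -> : \sum_(i < d) \sum_(j < d | (i < j)%N) rc (P i th + P j th)
            * braket (dket (W i) k th) (W j th) * braket (W j th) (dket (W i) l th)
        = \sum_(i < d) \sum_(j < d | (i < j)%N) rc (P i th + P j th)
            * b k i j * conjc (b l i j).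
  apply: eq_bigr => i _; apply: eq_bigr => j _.
  by rewrite (braketC (W j th)) !dket_braket_anti conjcN; ring.
have lam_herm m := coords_hermitian (W^~ th) (proj1 (lam_sld m)).
rewrite (sld_information_gap P_ge0 (lam_herm k) (lam_herm l)
  (coords_sld_solution k) (coords_sld_solution l)).
apply: eq_bigr => i _; rewrite summxE; apply: eq_bigr => j _.
by rewrite !mxE conjc_invol.
Qed.

Lemma CUmx_sub_CLmx : CUmx P W th - CLmx P W th =
  \sum_(i < d | 0 < P i th) rc (4 * P i th) *: rank1_mx (fun k => b k i i).
Proof.
rewrite /CUmx addrC addKr; apply/matrixP => k l.
rewrite !mxE summxE mulr_sumr; apply: eq_bigr => i _.
by rewrite !mxE (braketC (dket _ _ _)) rcM; ring.
Qed.

Let pair_gap_psd i j : psd (pair_gap i j).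
Proof.
apply: psdZ; last by apply: psdD; exact: psd_rank1.
by rewrite rc_ge0 divr_ge0 ?mulr_ge0 ?addr_ge0.
Qed.

Lemma Hmx_le_CLmx : psd_le (Hmx P W lam th) (CLmx P W th).
Proof.
by rewrite /psd_le CLmx_sub_Hmx; apply: psd_sum => i _; apply: psd_sum => j _.
Qed.

Lemma CLmx_le_CUmx : psd_le (CLmx P W th) (CUmx P W th).
Proof.
rewrite /psd_le CUmx_sub_CLmx; apply: psd_sum => i Pi.
by apply: psdZ; [rewrite rc_ge0 mulr_ge0 // ltW | exact: psd_rank1].
Qed.

Lemma Hmx_eq_CLmx_iff : Hmx P W lam th = CLmx P W th <->
  (forall m j k, j != k -> 0 < P j th -> 0 < P k th -> braket (dket (W j) m th) (W k th) = 0).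
Proof.
apply: (@iff_trans _ (\sum_(i < d) \sum_(j < d | (i < j)%N) pair_gap i j = 0)).
  rewrite -CLmx_sub_Hmx; split => [->|/eqP]; first by rewrite subrr.
  by rewrite subr_eq0 => /eqP.
split => [gap0 m j k jk Pj Pk | b0].
- have b_eq0 (i l : 'I_d) : (i < l)%N -> 0 < P i th -> 0 < P l th -> b m i l = 0.
    move=> il Pi Pl.
    have gap0_mm : (\sum_(i < d) \sum_(l < d | (i < l)%N) pair_gap i l) m m = 0.
      by rewrite gap0 mxE.
    have row0 := psd_sum_diag_eq0
      (fun i _ => psd_sum (fun l _ => pair_gap_psd i l)) gap0_mm (i := i) isT.
    have := psd_sum_diag_eq0 (fun l _ => pair_gap_psd i l) row0 (i := l) il.
    rewrite !mxE conjc_invol => /eqP; rewrite mulf_eq0 rc_eq0 gt_eqF /=; last first.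
      by rewrite divr_gt0 ?addr_gt0 ?mulr_gt0.
    by rewrite mulrC paddr_eq0 ?conjc_mul_ge0 // conjc_mul_eq0 => /andP[/eqP].
  case: (ltngtP j k) => [jk'|kj|/val_inj jk']; last by rewrite jk' eqxx in jk.
  + by rewrite dket_braket_anti b_eq0 ?oppr0.
  + by rewrite braketC b_eq0 // /= oppr0.
- apply: big1 => i _; apply: big1 => j ij.
  have /negPf nij : i != j by apply: contraTneq ij => ->; rewrite ltnn.
  have [/andP[Pi Pj]|] := boolP ((0 < P i th) && (0 < P j th)).
    have bij k : b k i j = 0.
      by apply/eqP; rewrite -oppr_eq0 -dket_braket_anti b0 ?nij.
    by rewrite /pair_gap !rank1_mx_eq0 ?addr0 ?scaler0 // => k; rewrite bij /= oppr0.
  rewrite /pair_gap /pair_weight negb_and -!leNgt => /orP[] P0.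
  + have -> : P i th = 0 by apply/le_anti; rewrite P0 P_ge0.
    by rewrite !(mulr0, mul0r) rc0 scale0r.
  + have -> : P j th = 0 by apply/le_anti; rewrite P0 P_ge0.
    by rewrite !(mulr0, mul0r) rc0 scale0r.
Qed.

Lemma CLmx_eq_CUmx_iff : CLmx P W th = CUmx P W th <->
  (forall m i, 0 < P i th -> braket (dket (W i) m th) (W i th) = 0).
Proof.
apply: (@iff_trans _
  (\sum_(i < d | 0 < P i th) rc (4 * P i th) *: rank1_mx (fun k => b k i i) = 0)).
  rewrite -CUmx_sub_CLmx; split => [->|/eqP]; first by rewrite subrr.
  by rewrite subr_eq0 => /eqP ->.
have term_psd i : 0 < P i th -> psd (rc (4 * P i th) *: rank1_mx (fun k => b k i i)).
  by move=> Pi; apply: psdZ; [rewrite rc_ge0 mulr_ge0 // ltW | exact: psd_rank1].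
split => [gap0 m i Pi | b0].
- have gap0_mm :
      (\sum_(i < d | 0 < P i th) rc (4 * P i th) *: rank1_mx (fun k => b k i i)) m m = 0.
    by rewrite gap0 mxE.
  have := psd_sum_diag_eq0 term_psd gap0_mm (i := i) Pi.
  rewrite !mxE => /eqP; rewrite mulf_eq0 rc_eq0 gt_eqF ?mulr_gt0 //= conjc_mul_eq0 => /eqP bii.
  by rewrite braketC bii /= oppr0.
- apply: big1 => i Pi; rewrite rank1_mx_eq0 ?scaler0 // => k.
  by rewrite braketC b0 // /= oppr0.
Qed.

End AtState.

Theorem theorem3p3 (R : realType) (p d : nat) (Theta : set 'rV[R]_p)
  (P : 'I_d -> 'rV[R]_p -> R) (W : 'I_d -> 'rV[R]_p -> 'cV[complex R]_d) :
  open Theta ->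
  (forall k th, Theta th -> 0 <= P k th) ->
  (forall th, Theta th -> \sum_(k < d) P k th = 1) ->
  (forall k th, Theta th -> differentiable (P k) th) ->
  (forall th, Theta th -> forall i j : 'I_d,
      braket (W i th) (W j th) = (i == j)%:R) ->
  (forall k (a : 'I_d) th, Theta th ->
      differentiable (fun x => complex.Re (W k x a 0)) th /\
      differentiable (fun x => complex.Im (W k x a 0)) th) ->
  forall th, Theta th ->
  forall lam : 'I_p -> 'M[complex R]_d,
  (forall m, is_SLD P W (lam m) m th) ->
  [/\ psd_le (Hmx P W lam th) (CLmx P W th),
      psd_le (CLmx P W th) (CUmx P W th),
      Hmx P W lam th = CLmx P W th <->
        (forall (m : 'I_p) (j k : 'I_d), j != k -> 0 < P j th -> 0 < P k th ->
           braket (dket (W j) m th) (W k th) = 0)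
    & CLmx P W th = CUmx P W th <->
        (forall (m : 'I_p) (i : 'I_d), 0 < P i th ->
           braket (dket (W i) m th) (W i th) = 0)].
Proof.
move=> Theta_open P_ge0 _ P_diff W_on W_diff th Theta_th lam lam_sld.
have W_on_near : \forall x \near th, orthonormal (W^~ x).
  by apply: filterS (Theta_open th Theta_th) => x /W_on.
have P_ge0_th k := P_ge0 k th Theta_th.
have P_diff_th k := P_diff k th Theta_th.
have W_diff_th k a := W_diff k a th Theta_th.
by split; [apply: Hmx_le_CLmx | apply: CLmx_le_CUmx | apply: Hmx_eq_CLmx_iff
  | apply: CLmx_eq_CUmx_iff].
Qed.
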